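(* Let $T\colon\mathbb{R}[x]\to\mathbb{R}[x]$ be the linear transformation determined by $T[x^n]=P_n^{Le}(x)$ for all $n\ge0$, and write $T=\sum_{n=0}^\infty\frac{Q_n^{Le}(x)}{n!}D^n$. Then for all $k\ge0$, $$Q^{Le}_{2k+1}(x)=0,\qquad Q^{Le}_{2k}(x)=\frac{(2k-1)!!}{(2k)!!}(x^2-1)^k.$$ Hence $T=\sum_{k=0}^\infty\frac{(2k-1)!!}{(2k)!!\,(2k)!}(x^2-1)^kD^{2k}$.
   Context: $P_n^{Le}(x)=\frac{1}{2^nn!}\frac{d^n}{dx^n}(x^2-1)^n$ is the $n$th Legendre polynomial; $D=d/dx$. Every linear operator $T\colon\mathbb{C}[x]\to\mathbb{C}[x]$ has a unique representation $T=\sum_{k=0}^\infty \frac{Q_k(x)}{k!}D^k$ with polynomials $Q_k(x)$. Double factorials use the conventions $(-1)!!=1$ and $0!!=1$. *)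

From HB Require Import structures.
From mathcomp Require Import all_boot all_order all_algebra.
From mathcomp Require Import reals.
Set Implicit Arguments. Unset Strict Implicit. Unset Printing Implicit Defensive.
Import Order.TTheory GRing.Theory Num.Theory.
Local Open Scope ring_scope.

(* Double factorial on nat: 0!! = 1, 1!! = 1, (n+2)!! = (n+2) * n!!.
   (2k-1)!! is written dfact k.*2.-1, so for k = 0 it is dfact 0 = 1,
   matching the convention (-1)!! = 1. *)
Fixpoint dfact (n : nat) : nat :=
  match n with
  | 0 => 1
  | 1 => 1
  | (m.+2) as n' => (n' * dfact m)%N
  end.

Definition legendre (R : fieldType) (n : nat) : {poly R} :=
  ((2 ^ n * n`!)%N%:R)^-1 *: ((('X^2 - 1) ^+ n)^`(n)).

From HB Require Import structures.
From mathcomp Require Import all_boot all_order all_algebra.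
From mathcomp Require Import reals.
From mathcomp Require Import ring zify.
Import Order.TTheory GRing.Theory Num.Theory.
Local Open Scope ring_scope.

(* An operator [sum_k Q_k D^k / k!] is determined by its values on monomials, since
   on [X^n] it gives [Q_n] plus a combination of the [Q_k] with [k < n]. So it
   suffices that the announced [Q_k] reproduce Rodrigues' formula, i.e. that
     D^n (x^2 - 1)^n / (2^n n!) = sum_k C(n, 2k) (2k-1)!!/(2k)!! x^(n-2k) (x^2 - 1)^k.
   This is the case [j = n], [u = x^2 - 1] of the expansion, proved by induction
   on [j], of the derivatives of a power of any [u] with [u'' = 2a]:
     D^j u^n = sum_m j! n! / (m! (j-2m)! (n-j+m)!) a^m u'^(j-2m) u^(n-j+m). *)

Lemma dfact_double k : dfact k.*2 = (2 ^ k * k`!)%N.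
Proof. by elim: k => [|k IH] //; rewrite doubleS /= IH factS expnS -!muln2; ring. Qed.

Lemma dfact_doubleS k : dfact k.*2.+1 = (k.*2.+1 * dfact k.*2.-1)%N.
Proof. by case: k => [|k] //=; rewrite muln1. Qed.

Lemma dfact_mul_pred_double k : (dfact k.*2.-1 * dfact k.*2)%N = (k.*2)`!.
Proof.
elim: k => [|k IH] //; rewrite doubleS -[k.*2.+2.-1]/k.*2.+1 dfact_doubleS /=.
by rewrite !factS -IH -!muln2; ring.
Qed.

Lemma sum_even_terms (V : nmodType) N (f : nat -> V) :
  (forall k, f k.*2.+1 = 0) -> (forall k, (N <= k)%N -> f k = 0) ->
  \sum_(k < N) f k = \sum_(k < N) f k.*2.
Proof.
move=> f_odd f_big.
have sum_double M : \sum_(0 <= k < M.*2) f k = \sum_(0 <= k < M) f k.*2.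
  elim: M => [|M IH]; first by rewrite !big_geq.
  by rewrite doubleS !big_nat_recr //= IH f_odd addr0.
rewrite -(big_mkord xpredT f) -(big_mkord xpredT (fun k => f k.*2)) -sum_double -addnn.
rewrite (big_cat_nat (leq0n N) (leq_addr N N)) /=.
rewrite [X in _ + X]big1_seq ?addr0 // => k /andP[_].
by rewrite mem_index_iota => /andP[/f_big].
Qed.

Lemma natr_fact_neq0 (R : numDomainType) n : n`!%:R != 0 :> R.
Proof. by rewrite pnatr_eq0 -lt0n fact_gt0. Qed.

Section DerivnExpQuadratic.
Variables (R : numFieldType) (a : R) (u : {poly R}).
Hypothesis u_deriv2 : u^`(2) = (a *+ 2)%:P.

(* [1/(j - k)!], read as [0] when [k > j] (1/Gamma vanishes at its poles): this
   makes the recurrences below hold without case distinctions. *)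
Definition inv_fact_sub j k : R := if (k <= j)%N then ((j - k)`!%:R)^-1 else 0.

Lemma inv_fact_subSS j k : inv_fact_sub j.+1 k.+1 = inv_fact_sub j k.
Proof. by rewrite /inv_fact_sub ltnS subSS. Qed.

Lemma inv_fact_subS j k : inv_fact_sub j k = (j.+1 - k)%:R * inv_fact_sub j.+1 k.
Proof.
rewrite /inv_fact_sub; case: (leqP k j) => [le_kj | lt_jk].
  rewrite leqW // subSn // factS natrM invfM mulrA mulfV ?mul1r //.
  by rewrite pnatr_eq0.
by rewrite (_ : j.+1 - k = 0)%N ?mul0r ?if_same //; lia.
Qed.

Lemma inv_fact_sub_mul j k : inv_fact_sub j k * (j - k)%:R = inv_fact_sub j k.+1.
Proof.
case: j => [|j]; first by rewrite sub0n mulr0 /inv_fact_sub.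
by rewrite inv_fact_subSS (inv_fact_subS j) mulrC.
Qed.

Lemma natrB_inv_fact_sub j k :
  (j - k)%:R * inv_fact_sub j k = (j%:R - k%:R) * inv_fact_sub j k.
Proof. by rewrite /inv_fact_sub; case: ifP => [/natrB -> | _]; rewrite ?mulr0. Qed.

Definition quad_coef n j m : R :=
  (j`! * n`!)%:R / (m`! * (n - j + m)`!)%:R * inv_fact_sub j m.*2.

Lemma quad_coefS0 n j : (j < n)%N ->
  quad_coef n j.+1 0 = quad_coef n j 0 * (n - j)%:R.
Proof.
move=> lt_jn; rewrite /quad_coef !addn0 [inv_fact_sub j 0]inv_fact_subS subn0.
have -> : (n - j = (n - j.+1).+1)%N by lia.
rewrite !factS !natrM.
by field; rewrite -?natrD ?nat1r ?natr_fact_neq0 ?pnatr_eq0.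
Qed.

Lemma quad_coefSS n j m : (j < n)%N ->
  quad_coef n j.+1 m.+1 =
  quad_coef n j m * (j - m.*2)%:R * 2 + quad_coef n j m.+1 * (n - j + m.+1)%:R.
Proof.
move=> lt_jn; rewrite /quad_coef -[_ * inv_fact_sub j m.*2 * _]mulrA.
rewrite inv_fact_sub_mul -(inv_fact_subSS j m.*2.+1).
rewrite (inv_fact_subS j m.+1.*2) natrB_inv_fact_sub.
rewrite (_ : n - j.+1 + m.+1 = n - j + m)%N ?addnS; last lia.
set F := inv_fact_sub _ _.
rewrite !factS -mul2n !natrM.
by field; rewrite -?natrD ?nat1r ?natr_fact_neq0 ?pnatr_eq0.
Qed.

Lemma deriv_mul_exp_quad b k :
  (u^`() ^+ b * u ^+ k)^`() =
  (b%:R * 2 * a) *: (u^`() ^+ b.-1 * u ^+ k) + k%:R *: (u^`() ^+ b.+1 * u ^+ k.-1).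
Proof.
have u_dderiv : u^`()^`() = (a *+ 2)%:P by rewrite -u_deriv2 derivnS derivn1.
rewrite derivM !deriv_exp u_dderiv exprS -!mul_polyC !polyCM !polyC_natr polyCMn.
ring.
Qed.

Lemma quad_coef_small n j m : (j < m.*2)%N -> quad_coef n j m = 0.
Proof. by rewrite /quad_coef /inv_fact_sub ltnNge => /negbTE -> /=; rewrite mulr0. Qed.

Lemma derivn_exp_quad n j : (j <= n)%N ->
  (u ^+ n)^`(j) = \sum_(0 <= m < n.+1)
    (quad_coef n j m * a ^+ m) *: (u^`() ^+ (j - m.*2)%N * u ^+ (n - j + m)%N).
Proof.
elim: j => [|j IH] le_jn.
  rewrite derivn0 big_nat_recl // big1 => [|m _]; last first.
    by rewrite quad_coef_small // mul0r scale0r.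
  rewrite /quad_coef /inv_fact_sub /= !subn0 !addn0 expr0 mul1r mulr1.
  by rewrite (_ : 0`! = 1)%N // !mul1n invr1 mulr1 divff ?natr_fact_neq0 // scale1r addr0.
rewrite derivnS IH /=; last exact: ltnW.
rewrite raddf_sum /=.
under eq_bigr do rewrite derivZ deriv_mul_exp_quad scalerDr !scalerA.
rewrite big_split /= [in RHS]big_nat_recl // [X in X + _]big_nat_recr //=.
rewrite [X in _ + X]big_nat_recl // (_ : j - n.*2 = 0)%N; last lia.
rewrite !mul0r mulr0 scale0r addr0 addrCA -big_split /=; congr (_ + _).
  by rewrite quad_coefS0 // !addn0 !subn0 subnS mulrAC.
apply: eq_bigr => i _.
rewrite quad_coefSS // (_ : n - j.+1 + i.+1 = n - j + i)%N; last lia.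
rewrite (_ : (n - j + i.+1).-1 = n - j + i)%N; last lia.
rewrite (_ : j.+1 - i.+1.*2 = (j - i.*2).-1)%N; last lia.
case: (leqP i.+1.*2 j) => [le_2i2_j | lt_j_2i2].
  rewrite (_ : (j - i.+1.*2).+1 = (j - i.*2).-1)%N; last lia.
  by rewrite -scalerDl exprS; congr (_ *: _); ring.
rewrite (quad_coef_small n _ _ lt_j_2i2) !mul0r scale0r !addr0 exprS.
by congr (_ *: _); ring.
Qed.

End DerivnExpQuadratic.

Lemma deriv_X2_sub1 (R : nzRingType) : ('X^2 - 1 : {poly R})^`() = 'X *+ 2.
Proof. by rewrite derivB derivXn derivC subr0. Qed.

Lemma derivn2_X2_sub1 (R : nzRingType) :
  ('X^2 - 1 : {poly R})^`(2) = (1 *+ 2)%:P.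
Proof. by rewrite derivnS derivn1 deriv_X2_sub1 derivMn derivX polyCMn. Qed.

Section LegendreOpCoef.
Variable R : numFieldType.
Local Notation E := ('X^2 - 1 : {poly R}).

Definition legendre_op_coef k : {poly R} :=
  if odd k then 0 else ((dfact k.-1)%:R / (dfact k)%:R) *: E ^+ k./2.

Lemma legendre_op_coef_odd k : legendre_op_coef k.*2.+1 = 0.
Proof. by rewrite /legendre_op_coef /= odd_double. Qed.

Lemma legendre_op_coef_double k :
  legendre_op_coef k.*2 = ((dfact k.*2.-1)%:R / (dfact k.*2)%:R) *: E ^+ k.
Proof. by rewrite /legendre_op_coef odd_double half_double. Qed.

Lemma dfact_ratio k :
  (dfact k.*2.-1)%:R / (dfact k.*2)%:R = (k.*2)`!%:R / ((2 ^ k * k`!) ^ 2)%:R :> R.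
Proof.
rewrite -dfact_mul_pred_double dfact_double natrX !natrM natrX.
by field; rewrite natr_fact_neq0 expf_neq0 ?pnatr_eq0.
Qed.

Lemma legendre_expansion n :
  legendre R n = \sum_(k < n.+1) (k`!%:R)^-1 *: (legendre_op_coef k * ('X^n)^`(k)).
Proof.
rewrite (sum_even_terms _ _ (fun k => (k`!%:R)^-1 *: (legendre_op_coef k * ('X^n)^`(k))));
  last 2 first.
- by move=> k; rewrite legendre_op_coef_odd mul0r scaler0.
- by move=> k lt_nk; rewrite derivnXn ffact_small // mulr0n mulr0 scaler0.
rewrite /legendre (@derivn_exp_quad _ _ _ (derivn2_X2_sub1 R)) // deriv_X2_sub1.
rewrite big_mkord scaler_sumr; apply: eq_bigr => m _.
rewrite legendre_op_coef_double derivnXn subnn add0n expr1n mulr1 exprMn_n.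
have [le_2m_n | lt_n_2m] := leqP m.*2 n; last first.
  by rewrite quad_coef_small // ffact_small // mulr0n mulr0 scale0r !scaler0.
rewrite -!scaler_nat -!scalerAl -!scalerAr !scalerA [_ ^+ m * _]mulrC.
congr (_ *: _).
rewrite /quad_coef /inv_fact_sub le_2m_n subnn add0n dfact_ratio.
rewrite -!(ffact_fact le_2m_n) (_ : 2 ^ n = 2 ^ (n - m.*2) * 2 ^ m * 2 ^ m)%N; last first.
  by rewrite -!expnD -addnA addnn subnK.
rewrite !natrM !natrX.
by field; rewrite !natr_fact_neq0 pnatr_eq0 -lt0n ffact_gt0 le_2m_n !expf_neq0 ?pnatr_eq0.
Qed.

End LegendreOpCoef.

Lemma diff_op_coef_unique (R : numFieldType) (Q Q' : nat -> {poly R}) :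
  (forall n, \sum_(k < n.+1) (k`!%:R)^-1 *: (Q k * ('X^n)^`(k)) =
             \sum_(k < n.+1) (k`!%:R)^-1 *: (Q' k * ('X^n)^`(k))) ->
  Q =1 Q'.
Proof.
move=> eqQ; elim/ltn_ind => n IH; move: (eqQ n); rewrite !big_ord_recr /=.
under eq_bigr => k _ do rewrite (IH k (ltn_ord k)).
have leading (P : {poly R}) : (n`!%:R : R)^-1 *: (P * ('X^n)^`(n)) = P.
  rewrite derivnXn subnn expr0 ffactnn mulr_natr -scalerMnr scalerMnl -mulr_natr.
  by rewrite mulVf ?scale1r // natr_fact_neq0.
by move/addrI; rewrite !leading.
Qed.

Theorem theorem7p4 (R : realType) (T : {linear {poly R} -> {poly R}})
    (Q : nat -> {poly R}) :
  (forall n : nat, T 'X^n = legendre R n) ->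
  (forall p : {poly R},
      T p = \sum_(k < size p) (k`!%:R)^-1 *: (Q k * p^`(k))) ->
  (forall k : nat,
      Q k.*2.+1 = 0 /\
      Q k.*2 = ((dfact k.*2.-1)%:R / (dfact k.*2)%:R) *: ('X^2 - 1) ^+ k) /\
  (forall p : {poly R},
      T p = \sum_(k < size p)
              ((dfact k.*2.-1)%:R / ((dfact k.*2)%:R * (k.*2)`!%:R))
                *: (('X^2 - 1) ^+ k * p^`(k.*2))).
Proof.
move=> T_Xn T_expansion.
have Q_eq : Q =1 legendre_op_coef R.
  apply: diff_op_coef_unique => n.
  by rewrite -legendre_expansion -T_Xn T_expansion size_polyXn.
split=> [k | p]; first by rewrite !Q_eq legendre_op_coef_odd legendre_op_coef_double.
rewrite T_expansion (sum_even_terms _ _ (fun k => (k`!%:R)^-1 *: (Q k * p^`(k)))).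
- apply: eq_bigr => k _; rewrite Q_eq legendre_op_coef_double -scalerAl scalerA.
  by rewrite invfM mulrCA [_^-1 * _^-1]mulrC.
- by move=> k; rewrite Q_eq legendre_op_coef_odd mul0r scaler0.
- by move=> k le_pk; rewrite derivn_poly0 // mulr0 scaler0.
Qed.
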